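(* Let $K\ge 2$, $M,N,d$ be positive integers with $d\le\min(M,N)$. If the symmetric system $(M\times N,d)^K$ is proper, then $$\frac{dK}{\min(M,N)}\le 1+\frac{\max(M,N)}{\min(M,N)}-\frac{d}{\min(M,N)}.$$
   Context: A $K$-user MIMO interference system $\Pi_{k=1}^K(M^{[k]}\times N^{[k]},d^{[k]})$ is specified by positive integers $M^{[k]}$, $N^{[k]}$ and $d^{[k]}\le\min(M^{[k]},N^{[k]})$, $k\in\mathcal{K}=\{1,\dots,K\}$; the symmetric system $(M\times N,d)^K$ has $M^{[k]}=M$, $N^{[k]}=N$, $d^{[k]}=d$ for all $k$. Its variables are: for each $j\in\mathcal K$ and $n\in\{1,\dots,d^{[j]}\}$ a set $T_{j,n}$ of $M^{[j]}-d^{[j]}$ variables, and for each $k\in\mathcal K$, $m\in\{1,\dots,d^{[k]}\}$ a set $R_{k,m}$ of $N^{[k]}-d^{[k]}$ variables, all pairwise disjoint. The equations are $E^{kj}_{mn}$ for $j,k\in\mathcal K$, $k\ne j$, $m\le d^{[k]}$, $n\le d^{[j]}$, forming the set $\mathcal E$, with $\mathrm{var}(E^{kj}_{mn})=T_{j,n}\cup R_{k,m}$. The system is proper if for every $S\subseteq\mathcal E$, $|S|\le\left|\bigcup_{E\in S}\mathrm{var}(E)\right|$. *)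

From HB Require Import structures.
From mathcomp Require Import all_boot all_order all_algebra.
Set Implicit Arguments. Unset Strict Implicit. Unset Printing Implicit Defensive.

(* K-user MIMO interference system given by M, N, d : nat -> nat
   (users are indexed 0..K-1). *)

(* Variables: TVar j n t  is the t-th variable of T_{j,n} (t < M j - d j),
              RVar k m r  is the r-th variable of R_{k,m} (r < N k - d k). *)
Inductive mvar := TVar of nat & nat & nat | RVar of nat & nat & nat.

Definition mvar_enc (v : mvar) : bool * (nat * nat * nat) :=
  match v with TVar a b c => (true, (a, b, c)) | RVar a b c => (false, (a, b, c)) end.
Definition mvar_dec (p : bool * (nat * nat * nat)) : mvar :=
  match p with (true, (a, b, c)) => TVar a b c | (false, (a, b, c)) => RVar a b c end.
Lemma mvar_encK : cancel mvar_enc mvar_dec. Proof. by case. Qed.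
HB.instance Definition _ := Equality.copy mvar (can_type mvar_encK).

(* Equation E^{kj}_{mn} encoded as (k, j, m, n), 0-indexed. *)
Definition meqn := (nat * nat * nat * nat)%type.

Definition is_eqn (K : nat) (d : nat -> nat) (e : meqn) : bool :=
  let: (k, j, m, n) := e in
  [&& k < K, j < K, k != j, m < d k & n < d j].

Definition eqn_vars (M N d : nat -> nat) (e : meqn) : seq mvar :=
  let: (k, j, m, n) := e in
  [seq TVar j n t | t <- iota 0 (M j - d j)] ++
  [seq RVar k m r | r <- iota 0 (N k - d k)].

Definition proper (K : nat) (M N d : nat -> nat) : Prop :=
  forall S : seq meqn, uniq S -> all (is_eqn K d) S ->
    size S <= size (undup (flatten [seq eqn_vars M N d e | e <- S])).

Definition proper_sym (K M N d : nat) : Prop :=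
  proper K (fun _ => M) (fun _ => N) (fun _ => d).

From Pilot Require Import Defs.
From mathcomp Require Import all_boot all_order all_algebra zify ring.
Import Order.TTheory GRing.Theory Num.Theory.

(* Properness applied to the whole equation set: the symmetric system has
   K(K-1)d^2 equations but only Kd(M-d) + Kd(N-d) variables in total, so
   (K-1)d <= M + N - 2d, which is the claimed bound multiplied by min(M,N). *)

(* Stream (j, n) carries both variable blocks T_{j,n} and R_{j,n}. *)
Definition streams (us : seq nat) (d : nat -> nat) : seq (nat * nat) :=
  [seq (j, n) | j <- us, n <- iota 0 (d j)].

Lemma mem_streams us d j n : ((j, n) \in streams us d) = (j \in us) && (n < d j).
Proof.
apply/allpairsPdep/andP => [[j' [n' [uj' nd [-> ->]]]] | [uj nd]].
  by rewrite mem_iota in nd.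
by exists j, n; rewrite mem_iota.
Qed.

Lemma streams_uniq us d : uniq us -> uniq (streams us d).
Proof.
move=> Uus; apply: allpairs_uniq_dep => // [j _|[? ?] [? ?] _ _ [-> ->]] //.
exact: iota_uniq.
Qed.

Lemma size_streams_const us d : size (streams us (fun=> d)) = size us * d.
Proof. by rewrite size_allpairs size_iota. Qed.

Definition all_eqns (K : nat) (d : nat -> nat) : seq meqn :=
  [seq (km.1, jn.1, km.2, jn.2)
     | km <- streams (iota 0 K) d, jn <- streams (rem km.1 (iota 0 K)) d].

Lemma all_eqns_uniq K d : uniq (all_eqns K d).
Proof.
apply: allpairs_uniq_dep.
- exact/streams_uniq/iota_uniq.
- by move=> km _; apply/streams_uniq/rem_uniq/iota_uniq.
- by move=> [[k m] [j n]] [[k' m'] [j' n']] _ _ /= [-> -> -> ->].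
Qed.

Lemma all_eqns_valid K d : all (is_eqn K d) (all_eqns K d).
Proof.
apply/allP => _ /allpairsPdep[[k m] [[j n] [/= km jn ->]]].
move: km jn; rewrite !mem_streams mem_rem_uniq ?iota_uniq // !inE !mem_iota /=.
by rewrite !add0n eq_sym => /andP[-> ->] /andP[/andP[-> ->] ->].
Qed.

Lemma size_all_eqns_const K d : size (all_eqns K (fun=> d)) = K * d * ((K - 1) * d).
Proof.
set S := streams (iota 0 K) (fun=> d).
have const_size : [seq size (streams (rem km.1 (iota 0 K)) (fun=> d)) | km <- S]
    = nseq (size S) ((K - 1) * d).
  rewrite -(size_map (fun km => size (streams (rem km.1 (iota 0 K)) (fun=> d)))).
  apply/all_pred1P/allP => _ /mapP[[k m] + ->]; rewrite mem_streams => /andP[kK _].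
  by rewrite /= size_streams_const size_rem // size_iota subn1.
rewrite size_allpairs_dep const_size sumn_nseq size_streams_const size_iota.
by rewrite mulnC.
Qed.

Definition all_vars (K : nat) (M N d : nat -> nat) : seq mvar :=
  [seq TVar s.1 s.2 t | s <- streams (iota 0 K) d, t <- iota 0 (M s.1 - d s.1)] ++
  [seq RVar s.1 s.2 r | s <- streams (iota 0 K) d, r <- iota 0 (N s.1 - d s.1)].

Lemma size_all_vars_const K M N d :
  size (all_vars K (fun=> M) (fun=> N) (fun=> d)) = K * d * (M - d) + K * d * (N - d).
Proof. by rewrite /all_vars /= size_cat !size_allpairs !size_iota. Qed.

Lemma eqn_vars_sub_all_vars K M N d e :
  e \in all_eqns K d -> {subset eqn_vars M N d e <= all_vars K M N d}.
Proof.
move=> /allpairsPdep[[k m] [[j n] [/= km jn ->]]] v.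
have {}jn : (j, n) \in streams (iota 0 K) d.
  by move: jn km; rewrite !mem_streams mem_rem_uniq ?iota_uniq // => /andP[/andP[_ ->] ->].
rewrite !mem_cat => /orP[] /mapP[t t_in ->]; apply/orP; [left | right].
- by apply/allpairsPdep; exists (j, n), t.
- by apply/allpairsPdep; exists (k, m), t.
Qed.

(* [Defs.] is needed: fintype's [proper] shadows the properness predicate. *)
Lemma proper_size_all_eqns K M N d :
  Defs.proper K M N d -> size (all_eqns K d) <= size (all_vars K M N d).
Proof.
move=> /(_ _ (all_eqns_uniq K d) (all_eqns_valid K d)) /leq_trans; apply.
apply: uniq_leq_size (undup_uniq _) _ => v; rewrite mem_undup => /flatten_mapP[e e_in].
exact: eqn_vars_sub_all_vars.
Qed.

Lemma proper_sym_streams_bound K M N d :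
  0 < K -> 0 < d -> d <= minn M N -> proper_sym K M N d -> d * K + d <= M + N.
Proof.
move=> K0 d0; rewrite leq_min => /andP[dM dN] /proper_size_all_eqns.
rewrite size_all_eqns_const size_all_vars_const -mulnDr leq_pmul2l ?muln_gt0 ?K0 //.
nia.
Qed.

Local Open Scope ring_scope.

Theorem corollary1 (K M N d : nat) :
  (2 <= K)%N -> (0 < M)%N -> (0 < N)%N -> (0 < d)%N -> (d <= minn M N)%N ->
  proper_sym K M N d ->
  (d * K)%:R / (minn M N)%:R <= 1 + (maxn M N)%:R / (minn M N)%:R - d%:R / (minn M N)%:R :> rat.
Proof.
move=> K2 M0 N0 d0 dmin P.
have bound := @proper_sym_streams_bound K M N d (ltnW K2) d0 dmin P.
have min_gt0 : 0 < (minn M N)%:R :> rat by rewrite ltr0n leq_min M0 N0.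
have -> : 1 + (maxn M N)%:R / (minn M N)%:R - d%:R / (minn M N)%:R
    = ((minn M N)%:R + (maxn M N)%:R - d%:R) / (minn M N)%:R :> rat.
  by field; rewrite lt0r_neq0.
by rewrite ler_pM2r ?invr_gt0 // lerBrDr -!natrD ler_nat addn_min_max.
Qed.
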